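(* Let $\mathcal{F}^*=\{f\in\bar{\mathcal{F}} : \mathbb{E}_{\theta}[f(Z)]\le C \text{ for all }\theta\in\Theta_0\}$ (the rescaled set $C\cdot\mathcal{E}$ of all $e$-values, within the ambient class), and let $\mathcal{F}'\subseteq\bar{\mathcal{F}}$ be any incentive-aligned menu; assume the attainment assumption holds for both. Assume that for each $\theta\in\Theta_1$ the map $L\mapsto u(\theta,L)$ is affine on $[0,\infty)$. Then for every probability distribution $Q$ on $\Theta$, $$U(Q,\mathcal{F}^* )\ \ge\ U(Q,\mathcal{F}'),$$ regardless of which maximizers the agents select as best responses.
   Context: Let $\Theta$ be a set of types partitioned as $\Theta=\Theta_0\sqcup\Theta_1$ (null and nonnull types), and let $(P_\theta)_{\theta\in\Theta}$ be probability distributions on a measurable space $\mathcal{Z}$; $\mathbb{E}_\theta$ denotes expectation with $Z\sim P_\theta$. Fix a cost $C>0$. Fix an ambient class $\bar{\mathcal{F}}$ of measurable functions $f:\mathcal{Z}\to[0,\infty)$ (''license functions'') with $\mathbb{E}_\theta[f(Z)]<\infty$ for all $\theta$. A menu is a subset $\mathcal{F}\subseteq\bar{\mathcal{F}}$; the attainment assumption for $\mathcal{F}$ means that for every $\theta$, $\sup_{f\in\mathcal{F}}\mathbb{E}_\theta[f(Z)]$ is attained when $\mathcal{F}\ne\emptyset$. Agent behavior: an agent of type $\theta$ offered $\mathcal{F}$ opts in ($I=1$) iff $\mathcal{F}\neq\emptyset$ and $\max_{f\in\mathcal{F}}\mathbb{E}_\theta[f(Z)]>C$, in which case it selects some maximizer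 $f^{\mathrm{br}}(\cdot;\theta,\mathcal{F})\in\arg\max_{f\in\mathcal{F}}\mathbb{E}_\theta[f(Z)]$; otherwise it opts out ($I=0$). The realized license is $L=f^{\mathrm{br}}(Z;\theta,\mathcal{F})$ with $Z\sim P_\theta$. The principal's utility is a function $u:\Theta\times[0,\infty)\to\mathbb{R}$ such that: for $\theta\in\Theta_1$, $u(\theta,\cdot)$ is nondecreasing and $u(\theta,L)\ge 0$; for $\theta\in\Theta_0$, $u(\theta,\cdot)$ is nonincreasing, $u(\theta,0)\le0$ and $u(\theta,L)<0$ for all $L>0$. For a probability distribution $Q$ on $\Theta$, $U(Q,\mathcal{F})=\mathbb{E}_{\theta\sim Q}\big[\mathbb{E}_{Z\sim P_\theta}[u(\theta,L)\cdot I\mid\theta]\big]$. A menu $\mathcal{F}$ is incentive-aligned if $\mathbb{E}_\theta[f(Z)]\le C$ for all $\theta\in\Theta_0$ and all $f\in\mathcal{F}$. An $e$-value is a measurable $g\ge 0$ with $\mathbb{E}_\theta[g(Z)]\le 1$ for all $\theta\in\Theta_0$, and $\mathcal{E}$ is the set of $e$-values. *)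

From HB Require Import structures.
From mathcomp Require Import all_boot all_order all_algebra.
From mathcomp Require Import all_classical all_reals all_analysis.
Set Implicit Arguments. Unset Strict Implicit. Unset Printing Implicit Defensive.
Import Order.TTheory GRing.Theory Num.Theory.
Local Open Scope classical_set_scope.
Local Open Scope ring_scope.
Local Open Scope ereal_scope.

Section Defs.
Context (R : realType) (dZ : measure_display) (Z : measurableType dZ)
        (Theta : Type) (P : Theta -> probability Z R).

Definition Ex (th : Theta) (f : Z -> R) : \bar R := \int[P th]_z (f z)%:E.

Definition attains (F : set (Z -> R)) : Prop :=
  forall th, F !=set0 ->
    exists2 f, F f & forall g, F g -> Ex th g <= Ex th f.

Definition opts_in (C : R) (th : Theta) (F : set (Z -> R)) : Prop :=
  F !=set0 /\ C%:E < ereal_sup [set Ex th f | f in F].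

Definition I_opt (C : R) (th : Theta) (F : set (Z -> R)) : R :=
  \1_[set t | opts_in C t F] th.

Definition best_response (C : R) (F : set (Z -> R)) (br : Theta -> Z -> R)
  : Prop :=
  forall th, opts_in C th F ->
    F (br th) /\ forall g, F g -> Ex th g <= Ex th (br th).

Definition incentive_aligned (C : R) (Theta0 : set Theta)
  (F : set (Z -> R)) : Prop :=
  forall th f, Theta0 th -> F f -> Ex th f <= C%:E.

Definition Fstar (C : R) (Theta0 : set Theta) (Fbar : set (Z -> R))
  : set (Z -> R) :=
  [set f | Fbar f /\ forall th, Theta0 th -> Ex th f <= C%:E].

End Defs.

Definition Uprin (R : realType) (dZ : measure_display) (Z : measurableType dZ)
  (dT : measure_display) (Theta : measurableType dT)
  (P : Theta -> probability Z R) (C : R) (u : Theta -> R -> R)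
  (Q : probability Theta R) (F : set (Z -> R)) (br : Theta -> Z -> R)
  : \bar R :=
  \int[Q]_th (\int[P th]_z (u th (br th z) * I_opt P C th F)%:E).

(** A nonnull type that opts in under an incentive-aligned menu F' also opts in
    under F*, which contains F', and its best response in F* has at least the
    expected license of its best response in F'; since its utility is affine and
    nondecreasing, its expected utility is affine with nonnegative slope in the
    expected license.  A nonnull type opting in only under F* contributes a
    nonnegative utility, and null types opt out of both menus because both are
    incentive aligned.  Integrating this type-wise comparison against Q gives
    the result. *)

From HB Require Import structures.
From mathcomp Require Import all_boot all_order all_algebra.
From mathcomp Require Import all_classical all_reals all_analysis.
Set Implicit Arguments. Unset Strict Implicit. Unset Printing Implicit Defensive.
Import Order.TTheory GRing.Theory Num.Theory.
Local Open Scope classical_set_scope.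
Local Open Scope ring_scope.
Local Open Scope ereal_scope.

(* No measurability is assumed: the type-wise integrands below involve the
   best-response selections, which are arbitrary functions of the type. *)
Lemma le_integral_pointwise d (T : measurableType d) (R : realType)
    (mu : measure T R) (f g : T -> \bar R) :
  (forall x, f x <= g x) -> \int[mu]_x f x <= \int[mu]_x g x.
Proof.
move=> fg; rewrite /integral /= !patch_setT.
apply: leeB; apply: ereal_sup_le => _ [h hf <-]; exists h => //= x.
  by apply: le_trans (hf x) _; rewrite !funeposE le_max2.
by apply: le_trans (hf x) _; rewrite !funenegE le_max2 // leeN2.
Qed.

Lemma integral_affine d (T : measurableType d) (R : realType)
    (mu : probability T R) (f : T -> R) (a b : R) :
  mu.-integrable setT (EFin \o f) ->
  \int[mu]_z (a + b * f z)%:E = a%:E + b%:E * \int[mu]_z (f z)%:E.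
Proof.
move=> intf; under eq_integral => z _ do rewrite EFinD EFinM.
rewrite integralD //; last exact: integrableZl.
- by rewrite integral_cst // [X in a%:E * X]probability_setT mule1 integralZl.
- exact: finite_measure_integrable_cst.
Qed.

Lemma affine_nondecreasing_slope_ge0 (R : realType) (u : R -> R) (a b : R) :
  (forall L, (0 <= L)%R -> u L = (a + b * L)%R) ->
  (forall x y, (0 <= x)%R -> (x <= y)%R -> (u x <= u y)%R) -> (0 <= b)%R.
Proof.
move=> uE umono; have := umono 0%R 1%R (lexx _) ler01.
by rewrite !uE ?ler01 // mulr0 mulr1 addr0 lerDl.
Qed.

Section Menus.
Context (R : realType) (dZ : measure_display) (Z : measurableType dZ)
        (Theta : Type) (P : Theta -> probability Z R) (C : R).

Lemma I_opt_in th F : opts_in P C th F -> I_opt P C th F = 1%R.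
Proof. by move=> h; rewrite /I_opt indicE mem_set. Qed.

Lemma I_opt_out th F : ~ opts_in P C th F -> I_opt P C th F = 0%R.
Proof. by move=> h; rewrite /I_opt indicE memNset. Qed.

Lemma opts_in_subset th F G : F `<=` G -> opts_in P C th F -> opts_in P C th G.
Proof.
move=> FG [[f Ff] hsup]; split; first by exists f; apply: FG.
by apply: (lt_le_trans hsup); apply: ereal_sup_le => _ [g Fg <-]; exists g;
  [apply: FG|].
Qed.

Lemma best_response_subset F G brF brG th :
  F `<=` G -> best_response P C F brF -> best_response P C G brG ->
  opts_in P C th F -> Ex P th (brF th) <= Ex P th (brG th).
Proof.
move=> FG hbrF hbrG hin; have [FbrF _] := hbrF th hin.
by apply: (hbrG th (opts_in_subset FG hin)).2; apply: FG.
Qed.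

Lemma incentive_aligned_opts_out Theta0 F th :
  incentive_aligned P C Theta0 F -> Theta0 th -> ~ opts_in P C th F.
Proof.
move=> hia h0 [_]; apply/negP; rewrite -leNgt.
by apply: ge_ereal_sup => _ [f Ff <-]; apply: hia.
Qed.

Lemma Fstar_incentive_aligned Theta0 Fbar :
  incentive_aligned P C Theta0 (Fstar P C Theta0 Fbar).
Proof. by move=> th f h0 [_ hf]; apply: hf. Qed.

Lemma incentive_aligned_sub_Fstar Theta0 Fbar F :
  F `<=` Fbar -> incentive_aligned P C Theta0 F ->
  F `<=` Fstar P C Theta0 Fbar.
Proof. by move=> FFbar hia f Ff; split; [apply: FFbar|move=> th h0; apply: hia]. Qed.

End Menus.

Section TypewiseUtility.
Context (R : realType) (dZ : measure_display) (Z : measurableType dZ)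
        (Theta : Type) (P : Theta -> probability Z R) (C : R)
        (u : Theta -> R -> R).

Definition type_utility th (F : set (Z -> R)) (br : Theta -> Z -> R) : \bar R :=
  \int[P th]_z (u th (br th z) * I_opt P C th F)%:E.

Lemma type_utility_out th F br : ~ opts_in P C th F -> type_utility th F br = 0.
Proof.
move=> hout; rewrite /type_utility I_opt_out //.
by apply: integral0_eq => z _; rewrite mulr0.
Qed.

Lemma type_utility_in th F br : opts_in P C th F ->
  type_utility th F br = \int[P th]_z (u th (br th z))%:E.
Proof.
by move=> hin; rewrite /type_utility I_opt_in //; under eq_integral do rewrite mulr1.
Qed.

Lemma type_utility_ge0 th F br :
  (forall L, (0 <= L)%R -> (0 <= u th L)%R) -> best_response P C F br ->
  (forall f z, F f -> (0 <= f z)%R) -> 0 <= type_utility th F br.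
Proof.
move=> u_ge0 hbr F_ge0; have [hin|hout] := pselect (opts_in P C th F).
  rewrite type_utility_in //; apply: integral_ge0 => z _; rewrite lee_fin.
  by apply: u_ge0; apply: F_ge0 (hbr th hin).1.
by rewrite type_utility_out.
Qed.

Lemma type_utility_affine th F br (a b : R) :
  (forall L, (0 <= L)%R -> u th L = (a + b * L)%R) ->
  opts_in P C th F -> (forall z, (0 <= br th z)%R) ->
  (P th).-integrable setT (EFin \o br th) ->
  type_utility th F br = a%:E + b%:E * Ex P th (br th).
Proof.
move=> uE hin br_ge0 intbr; rewrite type_utility_in //.
by under eq_integral => z _ do rewrite uE //; rewrite integral_affine.
Qed.

End TypewiseUtility.

Theorem theorem2p4 (R : realType) (dZ : measure_display) (Z : measurableType dZ)
  (dT : measure_display) (Theta : measurableType dT)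
  (P : Theta -> probability Z R) (Theta0 : set Theta) (C : R) (hC : (0 < C)%R)
  (Fbar : set (Z -> R))
  (hFbar : forall f, Fbar f ->
     [/\ measurable_fun setT f, (forall z, (0 <= f z)%R) &
         forall th, (P th).-integrable setT (EFin \o f)])
  (u : Theta -> R -> R)
  (hu1 : forall th, ~ Theta0 th ->
     (forall x y, (0 <= x)%R -> (x <= y)%R -> (u th x <= u th y)%R) /\
     (forall L, (0 <= L)%R -> (0 <= u th L)%R))
  (hu0 : forall th, Theta0 th ->
     [/\ (forall x y, (0 <= x)%R -> (x <= y)%R -> (u th y <= u th x)%R),
         (u th 0 <= 0)%R &
         (forall L, (0 < L)%R -> (u th L < 0)%R)])
  (F' : set (Z -> R)) (hF'sub : F' `<=` Fbar)
  (hF'ia : incentive_aligned P C Theta0 F')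
  (hattS : attains P (Fstar P C Theta0 Fbar))
  (hatt' : attains P F')
  (haff : forall th, ~ Theta0 th ->
     exists a b : R, forall L, (0 <= L)%R -> u th L = (a + b * L)%R)
  (Q : probability Theta R)
  (brS br' : Theta -> Z -> R)
  (hbrS : best_response P C (Fstar P C Theta0 Fbar) brS)
  (hbr' : best_response P C F' br') :
  Uprin P C u Q F' br' <= Uprin P C u Q (Fstar P C Theta0 Fbar) brS.
Proof.
set FS := Fstar P C Theta0 Fbar.
have F'FS : F' `<=` FS by exact: incentive_aligned_sub_Fstar.
have FS_Fbar f : FS f -> Fbar f by case.
apply: le_integral_pointwise => th; rewrite -!/(type_utility P C u th _ _).
have [h0|h1] := pselect (Theta0 th).
  rewrite !type_utility_out //; apply: incentive_aligned_opts_out h0 => //.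
  exact: Fstar_incentive_aligned.
have [umono u_ge0] := hu1 th h1.
have [hin'|hout'] := pselect (opts_in P C th F'); last first.
  rewrite type_utility_out //; apply: type_utility_ge0 => // f z /FS_Fbar.
  by case/hFbar => _ + _; apply.
have hinS := opts_in_subset F'FS hin'.
have [a [b uE]] := haff th h1.
have [/hF'sub/hFbar [_ br'_ge0 int_br'] _] := hbr' th hin'.
have [/FS_Fbar/hFbar [_ brS_ge0 int_brS] _] := hbrS th hinS.
rewrite !(type_utility_affine uE) // leeD2l // lee_wpmul2l ?lee_fin //.
- exact: affine_nondecreasing_slope_ge0 uE umono.
- exact: best_response_subset F'FS hbr' hbrS hin'.
Qed.
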